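(* Suppose each $f_v$ is $K_v$-Lipschitz and let $\bar K=\frac1{rn}\sum_vK_v$. If $T$ is sampled uniformly from all subsets of $V(G)$ of size $pn$, then $|\mathbb E_T(\xi)|\le\frac{\bar K}{rn-1}$.
   Context: Let $n,p,q$ be positive integers, $r=p+q$, $G$ a finite simple graph with $|V(G)|=rn$ and no isolated vertices; $\mathcal N(v)$, $d(v)$ neighbor set and degree. For each $v$, $f_v:2^{\mathcal N(v)}\to\mathbb R$ with $f_v(\emptyset)=0$. $\sigma_T(v)=q$ if $v\in T$, $-p$ otherwise; for $|T|=pn$, $\xi=\frac1{pqn}\sum_v\sigma_T(v)f_v(T\cap\mathcal N(v))$. $f_v$ is $K_v$-Lipschitz ($K_v>0$) if $|f_v(A)-f_v(A')|\le K_v|A\triangle A'|/d(v)$ for all $A,A'\subseteq\mathcal N(v)$. *)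

From HB Require Import structures.
From mathcomp Require Import all_boot all_order all_algebra.
Unset Printing Implicit Defensive.
Import Order.TTheory GRing.Theory Num.Theory.
Local Open Scope ring_scope.

Definition simple_graph (V : finType) (e : rel V) : Prop :=
  symmetric e /\ irreflexive e.

Definition nbhd (V : finType) (e : rel V) (v : V) : {set V} := [set u | e v u].
Definition deg (V : finType) (e : rel V) (v : V) : nat := #|nbhd V e v|.

Definition sigma (R : numDomainType) (V : finType) (p q : nat) (T : {set V}) (v : V) : R :=
  if v \in T then q%:R else - (p%:R).

Definition xi (R : numFieldType) (V : finType) (e : rel V) (n p q : nat)
  (f : V -> {set V} -> R) (T : {set V}) : R :=
  ((p * q * n)%:R)^-1 * \sum_(v : V) sigma R V p q T v * f v (T :&: nbhd V e v).

Definition lipschitz_at (R : numFieldType) (V : finType) (e : rel V)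
  (f : V -> {set V} -> R) (K : V -> R) (v : V) : Prop :=
  0 < K v /\
  forall A A' : {set V}, A \subset nbhd V e v -> A' \subset nbhd V e v ->
    `|f v A - f v A'| <= K v * #|(A :\: A') :|: (A' :\: A)|%:R / (deg V e v)%:R.

Definition expect_size (R : numFieldType) (V : finType) (k : nat)
  (X : {set V} -> R) : R :=
  (\sum_(T : {set V} | #|T| == k) X T) / #|[set T : {set V} | #|T| == k]|%:R.

(* Fix a vertex v, let k = pn and write g T := f_v (T :&: N(v)).  Pairing
   each k-set T containing v with each of the qn vertices u outside T, and
   matching T with the swapped set T - v + u (which avoids v, and arises from
   exactly k such pairs), gives
     n * sum_T sigma_T(v) g T = sum_(T ∋ v, u ∉ T) (g T - g (T - v + u)).
   A swap changes T :&: N(v) at most in u, and only when u is a neighbour of v,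
   so the Lipschitz bound makes each summand at most K_v [u ∈ N(v)] / d(v);
   there are d(v) 'C(rn - 2, pn - 1) pairs with u ∈ N(v).  Summing over v and
   using pn qn 'C(rn, pn) = rn (rn - 1) 'C(rn - 2, pn - 1) gives the bound. *)
From HB Require Import structures.
From mathcomp Require Import all_boot all_order all_algebra.
From mathcomp Require Import zify ring.
Import Order.TTheory GRing.Theory Num.Theory.
Local Open Scope ring_scope.

Lemma mul_bin_draws2 (N k : nat) :
  (k.+1 * (N - k.+1) * 'C(N, k.+1) = N * N.-1 * 'C(N.-2, k))%N.
Proof.
rewrite mulnAC -mul_bin_diag -!mulnA; congr (_ * _)%N.
have -> : (N - k.+1 = N.-1 - k)%N by lia.
by rewrite mul_bin_down mulnC.
Qed.

Lemma bin_draws2_ratio (R : numFieldType) (N k : nat) : (0 < k)%N -> (k < N)%N ->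
  'C(N.-2, k.-1)%:R = (k * (N - k) * 'C(N, k))%:R / (N * N.-1)%:R :> R.
Proof.
move=> k0 kN; have NN1 : (N * N.-1)%:R != 0 :> R by rewrite pnatr_eq0 muln_eq0; lia.
by rewrite -[in RHS](prednK k0) mul_bin_draws2 natrM mulrC mulKf.
Qed.

Lemma sum_bij_in (R : nmodType) (I : finType) (P Q : pred I) (h h' : I -> I)
    (F G : I -> R) :
  (forall i, P i -> Q (h i)) -> (forall j, Q j -> P (h' j)) ->
  (forall i, P i -> h' (h i) = i) -> (forall j, Q j -> h (h' j) = j) ->
  (forall i, P i -> F i = G (h i)) ->
  \sum_(i | P i) F i = \sum_(j | Q j) G j.
Proof.
move=> PQ QP hK h'K FG.
rewrite (reindex_onto h h' h'K); apply: eq_big => [i|i Pi]; last exact: FG.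
apply/idP/idP => [Pi|/andP[Qhi /eqP <-]]; last exact: QP.
by rewrite PQ //= hK.
Qed.

Section Swaps.

Variable V : finType.
Implicit Types (v u w : V) (T N : {set V}).

Lemma card_draws_mem_notin v w k : v != w ->
  #|[set T : {set V} | (#|T| == k.+1) && (v \in T) && (w \notin T)]| =
  'C(#|V| - 2, k).
Proof.
move=> vw; have -> : (#|V| - 2 = #|~: [set v; w]|)%N.
  by rewrite cardsCs setCK cards2 vw.
rewrite -cards_draws.
rewrite -(card_in_imset (f := fun T => T :\ v)); last first.
  by move=> A B; rewrite !inE => /andP[/andP[_ vA] _] /andP[/andP[_ vB] _] AB;
     rewrite -(setD1K vA) AB setD1K.
apply: eq_card => A; rewrite inE; apply/imsetP/idP => [[T]|].
  rewrite inE => /andP[/andP[/eqP cT vT] wT] ->.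
  have := cardsD1 v T; rewrite vT cT add1n => -[->]; rewrite eqxx andbT.
  apply/subsetP => x; rewrite !inE negb_or => /andP[-> xT] /=.
  by apply: contraTneq xT => ->.
move=> /andP[sA /eqP cA].
have vA : v \notin A by apply/negP => /(subsetP sA); rewrite !inE eqxx.
have wA : w \notin A by apply/negP => /(subsetP sA); rewrite !inE eqxx orbT.
exists (v |: A); last by rewrite setU1K.
by rewrite !inE cardsU1 vA cA eqxx eqxx /= negb_or wA andbT eq_sym.
Qed.

(* Each k-set avoiding v arises from exactly k pairs (T, u) with v in T,
   u outside T, as T - v + u. *)
Lemma sum_swap_in_out (R : nmodType) v k (g : {set V} -> R) :
  \sum_(T : {set V} | (#|T| == k) && (v \in T)) \sum_(u | u \notin T)
      g (u |: (T :\ v))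
  = \sum_(T : {set V} | (#|T| == k) && (v \notin T)) g T *+ k.
Proof.
rewrite pair_big_dep.
transitivity (\sum_(T : {set V} | (#|T| == k) && (v \notin T))
                \sum_(u | u \in T) g T); last first.
  by apply: eq_bigr => T /andP[/eqP cT _]; rewrite sumr_const cT.
rewrite pair_big_dep.
apply: (@sum_bij_in _ _ _ _ (fun x => (x.2 |: (x.1 :\ v), x.2))
                            (fun x => (v |: (x.1 :\ x.2), x.2))).
- move=> [T u] /= /andP[/andP[/eqP cT vT] uT].
  have uv : u != v by apply: contraNneq uT => ->.
  rewrite setU11 andbT cardsU1 !inE negb_and negb_or uT orbT eqxx /=.
  by rewrite (eq_sym v) uv -cT (cardsD1 v T) vT eqxx.
- move=> [T u] /= /andP[/andP[/eqP cT vT] uT].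
  have uv : u != v by apply: contraNneq vT => <-.
  rewrite setU11 cardsU1 !inE (negbTE vT) andbF (negbTE uv) /= andbT add1n.
  by move: (cardsD1 u T); rewrite uT cT add1n => ->; rewrite !eqxx.
- move=> [T u] /= /andP[/andP[_ vT] uT].
  have uv : u != v by apply: contraNneq uT => ->.
  by rewrite setU1K ?setD1K // !inE negb_and uT orbT.
- move=> [T u] /= /andP[/andP[_ vT] uT].
  have uv : u != v by apply: contraNneq vT => <-.
  by rewrite setU1K ?setD1K // !inE negb_and vT orbT.
- by [].
Qed.

Lemma card_symdiff_swap N T u v : u \notin T -> v \notin N ->
  (#|((T :&: N) :\: ((u |: (T :\ v)) :&: N)) :|:
     (((u |: (T :\ v)) :&: N) :\: (T :&: N))| <= (u \in N))%N.
Proof.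
move=> uT vN.
set D := _ :|: _.
have sDu : D \subset [set x | (x == u) && (u \in N)].
  apply/subsetP => x; rewrite !inE.
  have [->|xu] := eqVneq x u; first by rewrite (negbTE uT); case: (u \in N).
  have [->|xv] := eqVneq x v; first by rewrite (negbTE vN) !andbF.
  by case: (x \in T); case: (x \in N).
apply: (leq_trans (subset_leq_card sDu)); case: (u \in N).
  by rewrite /= -(cards1 u) subset_leq_card //; apply/subsetP => x; rewrite !inE andbT.
by rewrite leqn0 cards_eq0; apply/eqP/setP => x; rewrite !inE andbF.
Qed.

Lemma sum_swaps_into N v k : v \notin N ->
  (\sum_(T : {set V} | (#|T| == k.+1) && (v \in T))
     \sum_(u | u \notin T) ((u \in N) : nat) = #|N| * 'C(#|V| - 2, k))%N.
Proof.
move=> vN.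
transitivity (\sum_(T : {set V} | (#|T| == k.+1) && (v \in T))
                \sum_(u in N) ((u \notin T) : nat))%N.
  apply: eq_bigr => T _; rewrite big_mkcond [RHS]big_mkcond.
  by apply: eq_bigr => u _; case: (u \in T); case: (u \in N).
rewrite exchange_big /= -sum_nat_const; apply: eq_bigr => u uN.
rewrite -(@card_draws_mem_notin v u k); last by apply: contraNneq vN => ->.
rewrite -sum1dep_card big_mkcondr /= [LHS]big_mkcond [RHS]big_mkcond /=.
by apply: eq_bigr => T _; case: (#|T| == _); case: (v \in T); case: (u \in T).
Qed.

End Swaps.

Lemma sum_sigma_swaps (R : numDomainType) (V : finType) (n p q : nat) (v : V)
    (g : {set V} -> R) :
  #|V| = ((p + q) * n)%N ->
  n%:R * \sum_(T : {set V} | #|T| == (p * n)%N) sigma R V p q T v * g T =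
  \sum_(T : {set V} | (#|T| == (p * n)%N) && (v \in T))
     \sum_(u | u \notin T) (g T - g (u |: (T :\ v))).
Proof.
move=> cV; set k := (p * n)%N.
set S_in := \sum_(T : {set V} | (#|T| == k) && (v \in T)) g T.
set S_out := \sum_(T : {set V} | (#|T| == k) && (v \notin T)) g T.
have -> : \sum_(T : {set V} | #|T| == k) sigma R V p q T v * g T =
          q%:R * S_in - p%:R * S_out.
  rewrite (bigID (fun T : {set V} => v \in T)) /= !mulr_sumr -sumrN.
  congr (_ + _); apply: eq_bigr => T /andP[_ vT].
    by rewrite /sigma vT.
  by rewrite /sigma (negbTE vT) mulNr.
have out_card (T : {set V}) : #|T| = k -> #|~: T| = (q * n)%N.
  by move=> cT; rewrite cardsCs setCK cT cV /k mulnDl addKn.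
rewrite (eq_bigr (fun T : {set V} => \sum_(u | u \notin T) g T -
                          \sum_(u | u \notin T) g (u |: (T :\ v))));
  last by move=> T _; rewrite sumrB.
rewrite sumrB sum_swap_in_out sumrMnl -/S_out.
rewrite (eq_bigr (fun T : {set V} => g T *+ (q * n))); last first.
  move=> T /andP[/eqP cT _].
  by rewrite (eq_bigl [in ~: T]) ?sumr_const ?out_card // => u; rewrite inE.
rewrite sumrMnl -/S_in mulrBr !mulrA -!natrM !mulr_natl /k; congr (_ *+ _ - _ *+ _); lia.
Qed.

Section Vertex.

Variables (R : numFieldType) (V : finType) (e : rel V).
Variables (f : V -> {set V} -> R) (K : V -> R) (v : V).
Hypotheses (e_irr : irreflexive e) (f_lip : lipschitz_at R V e f K v).

Let N := nbhd V e v.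

Lemma lipschitz_swap (T : {set V}) (u : V) : u \notin T ->
  `|f v (T :&: N) - f v ((u |: (T :\ v)) :&: N)|
    <= K v * ((u \in N) : nat)%:R / (deg V e v)%:R.
Proof.
move=> uT; have [K0 lip] := f_lip.
have vN : v \notin N by rewrite inE e_irr.
apply: (le_trans (lip _ _ (subsetIr _ _) (subsetIr _ _))).
rewrite ler_wpM2r ?invr_ge0 ?ler0n //; apply: ler_wpM2l; first exact: ltW.
by rewrite ler_nat card_symdiff_swap.
Qed.

Lemma vertex_bound (n p q : nat) :
  (0 < p * n)%N -> #|V| = ((p + q) * n)%N -> (0 < deg V e v)%N ->
  n%:R * `|\sum_(T : {set V} | #|T| == (p * n)%N)
             sigma R V p q T v * f v (T :&: N)|
    <= K v * ('C(#|V| - 2, (p * n).-1))%:R.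
Proof.
move=> k0 cV dv; have vN : v \notin N by rewrite inE e_irr.
rewrite -[n%:R]ger0_norm ?ler0n // -normrM sum_sigma_swaps //.
apply: (le_trans (ler_norm_sum _ _ _)).
apply: (@le_trans _ _ (\sum_(T : {set V} | (#|T| == (p * n)%N) && (v \in T))
   \sum_(u | u \notin T) K v * ((u \in N) : nat)%:R / (deg V e v)%:R)).
  apply: ler_sum => T _; apply: (le_trans (ler_norm_sum _ _ _)).
  by apply: ler_sum => u uT; apply: lipschitz_swap.
rewrite (eq_bigr (fun T : {set V} => K v / (deg V e v)%:R *
           (\sum_(u | u \notin T) ((u \in N) : nat))%:R)); last first.
  by move=> T _; rewrite natr_sum mulr_sumr; apply: eq_bigr => u _; rewrite mulrAC.
rewrite -mulr_sumr -natr_sum -(prednK k0) sum_swaps_into // natrM.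
by rewrite mulrA divfK // pnatr_eq0 -lt0n.
Qed.

End Vertex.

Theorem mainTheorem13 (R : realFieldType) (V : finType) (e : rel V)
  (n p q : nat) (f : V -> {set V} -> R) (K : V -> R) :
  (0 < n)%N -> (0 < p)%N -> (0 < q)%N ->
  simple_graph V e ->
  #|V| = ((p + q) * n)%N ->
  (forall v : V, (0 < deg V e v)%N) ->
  (forall v : V, f v set0 = 0) ->
  (forall v : V, lipschitz_at R V e f K v) ->
  let Kbar := (((p + q) * n)%:R)^-1 * \sum_(v : V) K v in
  `|expect_size R V (p * n) (xi R V e n p q f)| <= Kbar / (((p + q) * n)%:R - 1).
Proof.
move=> n0 p0 q0 [_ e_irr] cV deg_gt0 _ f_lip /=.
set N := ((p + q) * n)%N; set k := (p * n)%N; set m := 'C(N, k).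
set C := 'C(#|V| - 2, k.-1); set S := \sum_v K v.
have k0 : (0 < k)%N by rewrite muln_gt0 p0 n0.
have kN : (k < N)%N by rewrite /N /k mulnDl -[X in (X < _)%N]addn0 ltn_add2l muln_gt0 q0 n0.
have SX : `|\sum_v \sum_(T : {set V} | #|T| == k) sigma R V p q T v *
             f v (T :&: nbhd V e v)| <= S * C%:R / n%:R.
  rewrite -mulrA mulr_suml; apply: (le_trans (ler_norm_sum _ _ _)); apply: ler_sum => v _.
  by rewrite mulrA ler_pdivlMr ?ltr0n // mulrC vertex_bound.
have -> : N%:R^-1 * S / (N%:R - 1) = ((p * q * n)%:R)^-1 * (S * C%:R / n%:R) / m%:R.
  have -> : C = 'C(N.-2, k.-1) by rewrite /C cV subn2.
  rewrite bin_draws2_ratio //; have -> : (N - k = q * n)%N by rewrite /N /k; lia.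
  rewrite /k /N -subn1 [(_ * (_ - 1))%:R]natrM natrB; last lia.
  rewrite !natrM natrD; field.
  rewrite -natrD -natrM subr_eq0 pnatr_eq1 !pnatr_eq0 -!lt0n bin_gt0; nia.
rewrite /expect_size card_draws cV -/N -/m /xi -mulr_sumr exchange_big /=.
rewrite !normrM !normfV !normr_nat.
by rewrite ler_wpM2r ?invr_ge0 ?ler0n // ler_wpM2l ?invr_ge0 ?ler0n.
Qed.
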